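(* Let $n\ge 2$ and let $D,D'\subseteq\Phi^+$ be rook placements. If $\Omega_D\subseteq\overline{\Omega_{D'}}$ (Zariski closure), then $\sigma_D\le_B\sigma_{D'}$, where $\le_B$ is the Bruhat–Chevalley order on the symmetric group $S_{2n-2}$.
   Context: Let $B\subseteq \mathrm{GL}_n(\mathbb{C})$ be the group of invertible upper-triangular matrices. Let $\mathfrak{n}$ be the Lie algebra of strictly upper-triangular $n\times n$ matrices; identify $\mathfrak{n}^*$ with the strictly lower-triangular matrices via $\langle\lambda,x\rangle=\mathrm{tr}(\lambda x)$, so that $b.\lambda=(b\lambda b^{-1})_{\mathrm{low}}$ ($X_{\mathrm{low}}$ = strictly lower-triangular part). Let $e_{i,j}$ be the elementary matrix units. Let $\Phi^+=\{(i,j)\in\mathbb{Z}^2:1\le j<i\le n\}$, with rows $\mathcal{R}_k=\{(k,s)\in\Phi^+\}$ and columns $\mathcal{C}_k=\{(r,k)\in\Phi^+\}$. A rook placement is a subset $D\subseteq\Phi^+$ with $|D\cap\mathcal{R}_k|\le 1$ and $|D\cap\mathcal{C}_k|\le1$ for all $k$. Put $f_D=\sum_{(i,j)\in D}e_{i,j}$ and $\Omega_D=B.f_D$. For a rook placement $D=\{(i_1,j_1),\dots,(i_s,j_s)\}$, the involution $\sigma_D\in S_{2n-2}$ is the product of the (pairwise disjoint) transpositions $(2i_r-2,\,2j_r-1)$, $1\le r\le s$. *)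

From HB Require Import structures.
From mathcomp Require Import all_boot all_order all_fingroup all_algebra.
Set Implicit Arguments. Unset Strict Implicit. Unset Printing Implicit Defensive.
Import GRing.Theory.
Local Open Scope ring_scope.

(* Indices are 0-based: the paper's (i,j) with 1 <= j < i <= n is our
   (i-1, j-1) : 'I_n * 'I_n with j-1 < i-1. *)

Definition in_Phi_plus (n : nat) (p : 'I_n * 'I_n) : bool := (p.2 < p.1)%N.

Definition rook_placement (n : nat) (D : {set 'I_n * 'I_n}) : Prop :=
  [/\ {subset D <= in_Phi_plus (n:=n)},
      (forall k : 'I_n, #|[set p in D | p.1 == k]| <= 1)%N &
      (forall k : 'I_n, #|[set p in D | p.2 == k]| <= 1)%N].

Section Orbits.
Variable F : fieldType.
Variable n : nat.

Definition lowpart (A : 'M[F]_n) : 'M[F]_n :=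
  \matrix_(i, j) (if (j < i)%N then A i j else 0).

Definition in_B (b : 'M[F]_n) : Prop :=
  b \in unitmx /\ (forall i j : 'I_n, (j < i)%N -> b i j = 0).

Definition B_act (b lam : 'M[F]_n) : 'M[F]_n := lowpart (b *m lam *m invmx b).

Definition f_D (D : {set 'I_n * 'I_n}) : 'M[F]_n :=
  \matrix_(i, j) (if (i, j) \in D then 1 else 0).

Definition Omega (D : {set 'I_n * 'I_n}) (x : 'M[F]_n) : Prop :=
  exists b, in_B b /\ x = B_act b (f_D D).

End Orbits.

Inductive mpoly (F : Type) (V : Type) : Type :=
| MConst of F
| MVar of V
| MAdd of mpoly F V & mpoly F V
| MMul of mpoly F V & mpoly F V
| MOpp of mpoly F V.

Fixpoint meval (F : ringType) (V : Type) (x : V -> F) (p : mpoly F V) : F :=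
  match p with
  | MConst c => c
  | MVar v => x v
  | MAdd p q => meval x p + meval x q
  | MMul p q => meval x p * meval x q
  | MOpp p => - meval x p
  end.

Definition zariski_closure (F : ringType) (n : nat) (S : 'M[F]_n -> Prop)
  (x : 'M[F]_n) : Prop :=
  forall p : mpoly F ('I_n * 'I_n),
    (forall y, S y -> meval (fun v => y v.1 v.2) p = 0) ->
    meval (fun v => x v.1 v.2) p = 0.

Definition inv_count (m : nat) (s : {perm 'I_m}) : nat :=
  #|[set p : 'I_m * 'I_m | (p.1 < p.2)%N && (s p.2 < s p.1)%N]|.

Definition is_transposition (m : nat) (t : {perm 'I_m}) : bool :=
  [exists a : 'I_m, exists b : 'I_m, (a != b) && (t == tperm a b)].

Definition bruhat_step (m : nat) : rel {perm 'I_m} :=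
  fun u v => [exists t, is_transposition t && (v == (u * t)%g)
                        && (inv_count u < inv_count v)%N].

Definition bruhat_le (m : nat) (u v : {perm 'I_m}) : bool :=
  connect (@bruhat_step m) u v.

(** Transposition of the positions with (0-based) values a, b in 'I_m,
    or identity if out of range (never happens below). *)
Definition tr_nat (m a b : nat) : {perm 'I_m} :=
  match @insub nat (fun k => (k < m)%N) 'I_m a,
        @insub nat (fun k => (k < m)%N) 'I_m b with
  | Some x, Some y => tperm x y
  | _, _ => 1%g
  end.

(** sigma_D in S_{2n-2}: product of transpositions (2i-2, 2j-1) (1-based),
    i.e. (2i0-1, 2j0) 0-based with i0 = i-1, j0 = j-1. *)
Definition sigma_D (n : nat) (D : {set 'I_n * 'I_n}) : {perm 'I_(n.*2 - 2)} :=
  (\prod_(p in D) tr_nat (n.*2 - 2) ((nat_of_ord p.1).*2 - 1) (nat_of_ord p.2).*2)%g.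

From HB Require Import structures.
From mathcomp Require Import all_boot all_order all_fingroup all_algebra.
From mathcomp Require Import zify.
Set Implicit Arguments. Unset Strict Implicit. Unset Printing Implicit Defensive.
Import GRing.Theory.

(* The proof compares three numerical invariants.
   1. Bruhat rank criterion (for any m).  For a permutation u of 'I_m let
      r_u(p, q) = #{k < p | q <= u k}.  If r_u <= r_v pointwise, then
      u <= v: while u <> v, swapping u at its first disagreement a with the
      first later position b whose value lies in (u a, v a] is a Bruhat step
      (the inversion count grows) that keeps r_u <= r_v and strictly
      increases the total rank, which is bounded by that of v.
   2. Rank of sigma_D.  sigma_D is a product of disjoint transpositions of
      the positions 2j < 2i - 1, one per rook (i, j); each adds the
      indicator of a square to the rank function, and the number of squares
      containing (p, q) is the number of rooks of D in a south-west corner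
      {rows >= i, columns <= j} with j < i determined by (p, q).
   3. Geometry.  A corner minor larger than the number of rooks of D' in
      that corner vanishes on Omega_D' (it factors through those rooks, as
      b and b^-1 are upper triangular) and is a polynomial in the entries,
      whereas the minor of f_D on the rooks of D in the corner equals 1.
      Hence the closure hypothesis gives corner-count domination.
   The theorem chains 3, 2 and 1; no assumption on the field is needed. *)

Lemma ltn_sum_pointwise (I : finType) (f g : I -> nat) (j : I) :
  (forall i, f i <= g i) -> f j < g j -> \sum_i f i < \sum_i g i.
Proof.
move=> fg fgj; rewrite (bigD1 j) // [X in _ < X](bigD1 j) //=.
by rewrite -addSn leq_add // leq_sum.
Qed.

Lemma ord_neq_lt n (a b : 'I_n) : a < b -> a != b.
Proof. by move=> ab; rewrite -val_eqE /= neq_ltn ab. Qed.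

Section BruhatRankCriterion.
Variable m : nat.
Implicit Types u v w : {perm 'I_m}.

(* [perm_rank u p q] counts the positions k < p with u k >= q, i.e. the 1's
   of the permutation matrix of u in the rectangle [0,p) x [q,m). *)
Definition perm_rank u (p q : nat) : nat := \sum_(k < m) ((k < p) && (q <= u k)).

(* Swapping the positions a, b of u is right multiplication by the
   transposition of the values u a, u b, so it is a Bruhat candidate step. *)
Lemma tperm_mul_conj u (a b : 'I_m) : (tperm a b * u = u * tperm (u a) (u b))%g.
Proof. by rewrite -tpermJ /conjg mulgA mulgV mul1g. Qed.

Lemma perm_rank_swap u (a b : 'I_m) p q : a < b -> u a < u b ->
  perm_rank (tperm a b * u) p q =
  perm_rank u p q + ((a < p <= b) && (u a < q <= u b)).
Proof.
move=> ab uab; have nba : b != a by rewrite eq_sym ord_neq_lt.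
rewrite /perm_rank (bigD1 a) //= (bigD1 b) //= [in RHS](bigD1 a) //= [in RHS](bigD1 b) //=.
rewrite !permM tpermL tpermR.
under eq_bigr => k /andP[ka kb] do rewrite permM (tpermD (x:=a) (y:=b)) 1?eq_sym //.
by case: (ltnP a p); case: (ltnP b p); case: (leqP q (u a)); case: (leqP q (u b)) => //= *; lia.
Qed.

(* Swapping an increasing pair a < b strictly increases the number of
   inversions: the inversions of u inject into those of the swapped
   permutation w, missing the new inversion (a, b). *)
Lemma inv_count_swap u (a b : 'I_m) : a < b -> u a < u b ->
  inv_count u < inv_count (tperm a b * u).
Proof.
move=> ab uab; set t := tperm a b; set w := (t * u)%g.
have wE k : w k = u (t k) by rewrite permM.
pose Xu := [set p : 'I_m * 'I_m | (p.1 < p.2) && (u p.2 < u p.1)].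
pose Xw := [set p : 'I_m * 'I_m | (p.1 < p.2) && (w p.2 < w p.1)].
pose psi p := if p \in Xw then p else (t p.1, t p.2).
have abXw : (a, b) \in Xw by rewrite inE /= !wE /t tpermL tpermR ab.
have psi_inj : {in Xu &, injective psi}.
  move=> [x1 x2] [y1 y2]; rewrite /psi !inE /= !wE => /andP[x12 ux] /andP[y12 uy].
  case: ifP => hx; case: ifP => hy //.
  - by move=> [e1 e2]; move: ux hy; rewrite e1 e2 y12 /= => ->.
  - by move=> [e1 e2]; move: uy hx; rewrite -e1 -e2 x12 /= => ->.
  - by move=> [/perm_inj -> /perm_inj ->].
have t_rev (x1 x2 : 'I_m) : x1 < x2 -> t x2 < t x1 ->
    (x1 == a) && (x2 <= b) || (a <= x1) && (x2 == b).
  have vneq (x y : 'I_m) : x <> y -> val x != val y by move=> nxy; apply/eqP => /val_inj.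
  by rewrite /t -!val_eqE /=; do 2 case: tpermP => [->|->|/vneq ? /vneq ?]; lia.
have psi_sub : [set psi x | x in Xu] \subset Xw :\ (a, b).
  apply/subsetP => _ /imsetP[[x1 x2] + ->]; rewrite inE /= => /andP[x12 ux].
  rewrite /psi; case: ifP => hx.
    by rewrite in_setD1 hx andbT; apply: contraTneq ux => -[-> ->]; rewrite -leqNgt ltnW.
  move: hx; rewrite !inE /= !wE /t !tpermK ux x12 andbT /= => /negbT.
  rewrite -leqNgt => uwx.
  apply/andP; split.
    by apply: contraTneq x12 => -[/(canRL (tpermK _ _)) -> /(canRL (tpermK _ _)) ->];
       rewrite tpermL tpermR -leqNgt ltnW.
  rewrite ltnNge; apply/negP => tx; have {tx}tx : t x2 < t x1.
    by rewrite ltn_neqAle tx andbT val_eqE (inj_eq perm_inj) eq_sym ord_neq_lt.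
  case/orP: (t_rev _ _ x12 tx) => /andP[] => [/eqP ex _|_ /eqP ex].
  + by move: uwx ux x12; rewrite ex /t tpermL; case: tpermP => [->|->|_ _]; lia.
  + by move: uwx ux x12; rewrite ex /t tpermR; case: tpermP => [->|->|_ _]; lia.
have := subset_leq_card psi_sub; rewrite card_in_imset // => h.
by rewrite /inv_count -/Xu -/Xw; move: h; rewrite (cardsD1 (a, b) Xw) abXw; lia.
Qed.

Definition rank_le u v : Prop := forall p q, perm_rank u p q <= perm_rank v p q.

Lemma perm_rank_succ u (p : 'I_m) q :
  perm_rank u p.+1 q = perm_rank u p q + (q <= u p).
Proof.
rewrite /perm_rank (bigD1 p) //= [X in _ = X + _](bigD1 p) //= ltnn ltnSn addnC.
congr (_ + _); apply: eq_bigr => k kp; rewrite ltnS leq_eqVlt.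
by rewrite val_eqE (negbTE kp).
Qed.

Lemma perm_rank_eq_below u v (a : nat) q :
  (forall k : 'I_m, k < a -> u k = v k) -> perm_rank u a q = perm_rank v a q.
Proof. by move=> uv; apply: eq_bigr => k _; case: ltnP => //= /uv ->. Qed.

Definition band_count u (p q1 q2 : nat) : nat :=
  \sum_(k < m) [&& k < p, q1 <= u k & u k < q2].

Lemma perm_rank_band u p q q' : q <= q' ->
  perm_rank u p q = perm_rank u p q' + band_count u p q q'.
Proof.
move=> qq'; rewrite /perm_rank /band_count -big_split; apply: eq_bigr => k _ /=.
by case: (k < p) => //=; case: (leqP q (u k)); case: (leqP q' (u k)) => //= *; lia.
Qed.

Lemma first_difference u v : u != v -> rank_le u v ->
  exists a : 'I_m, (forall k : 'I_m, k < a -> u k = v k) /\ u a < v a.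
Proof.
move=> nuv uv; have [k0 uvk0] : exists k0, u k0 != v k0.
  apply/existsP; apply: contraR nuv => /existsPn uv_eq.
  by apply/eqP/permP => k; apply/eqP; rewrite -[_ == _]negbK uv_eq.
case: (@arg_minnP _ k0 (fun k => u k != v k) (fun k : 'I_m => nat_of_ord k) uvk0)
  => a uva amin.
have below (k : 'I_m) : k < a -> u k = v k.
  by move=> ka; apply/eqP; apply: contraTT ka => /amin; rewrite -leqNgt.
exists a; split => //; rewrite ltn_neqAle val_eqE uva leqNgt /=; apply/negP => vu.
have := uv a.+1 (u a); rewrite !perm_rank_succ (perm_rank_eq_below _ below) leqnn.
by rewrite (leqNgt (u a)) vu; lia.
Qed.

(* Swapping a with the first later position b whose value lies in
   (u a, v a] keeps u dominated by v: on the new rectangles the count of v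
   is strictly larger, because of the point (a, v a). *)
Lemma swap_keeps_rank_le u v (a b : 'I_m) :
  (forall k : 'I_m, k < a -> u k = v k) -> a < b -> u a < u b -> u b <= v a ->
  (forall k : 'I_m, a < k -> u a < u k -> u k <= v a -> b <= k) ->
  rank_le u v -> rank_le (tperm a b * u) v.
Proof.
move=> below ab uab ubva bmin uv p q; rewrite perm_rank_swap //.
case: (boolP [&& a < p <= b, u a < q & q <= u b]) => [|_]; last by rewrite addn0 uv.
case/and3P => /andP[ap pb] aq qb; rewrite addn1.
have qva : q <= (v a).+1 by lia.
rewrite (perm_rank_band u p qva) (perm_rank_band v p qva).
have band_u : band_count u p q (v a).+1 = band_count u a q (v a).+1.
  apply: eq_bigr => k _; case: (ltnP k a) => ka; first by rewrite (ltn_trans ka ap).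
  case: (ltnP k p) => kp //=; have [->|nka] := eqVneq k a; first by lia.
  have ak : a < k by rewrite ltn_neqAle ka andbT eq_sym val_eqE.
  case: (leqP q (u k)) => //= qk; case: (ltnP (u k) (v a).+1) => //= kva.
  by have := bmin k ak; lia.
have band_v : band_count v a q (v a).+1 < band_count v p q (v a).+1.
  rewrite /band_count (bigD1 a) //= [X in _ < X](bigD1 a) //= ltnn ap ltnSn andbT.
  rewrite (_ : q <= v a) ?add0n ?add1n ?ltnS; last by lia.
  by apply: leq_sum => k _; case: (ltnP k a) => //= ka; rewrite (ltn_trans ka ap).
have band_uv : band_count u a q (v a).+1 = band_count v a q (v a).+1.
  by apply: eq_bigr => k _; case: ltnP => //= /below ->.
by have := uv p (v a).+1; lia.
Qed.

(* Total rank: strictly increases along the steps built below, and is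
   bounded by that of v under dominance, hence a termination measure. *)
Definition rank_total u : nat := \sum_(p < m.+1) \sum_(q < m.+1) perm_rank u p q.

Lemma rank_total_le u v : rank_le u v -> rank_total u <= rank_total v.
Proof. by move=> uv; apply: leq_sum => p _; apply: leq_sum => q _; apply: uv. Qed.

Lemma bruhat_step_toward u v : u != v -> rank_le u v ->
  exists2 w, bruhat_step u w & rank_le w v /\ rank_total u < rank_total w.
Proof.
move=> nuv uv; have [a [below uva]] := first_difference nuv uv.
pose c := (u^-1)%g (v a); have uc : u c = v a by rewrite permKV.
have ac : a < c.
  rewrite ltnNge leq_eqVlt negb_or; apply/andP; split.
    by apply: contraTneq uva => /val_inj ca; rewrite -uc ca ltnn.
  apply/negP => ca; have := below _ ca; rewrite uc => /perm_inj ea.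
  by move: ca; rewrite ea ltnn.
have Pc : [&& a < c, u a < u c & u c <= v a] by rewrite ac uc uva leqnn.
case: (@arg_minnP _ c (fun k : 'I_m => [&& a < k, u a < u k & u k <= v a])
         (fun k : 'I_m => nat_of_ord k) Pc) => b /and3P[ab uab ubva] bmin.
exists (tperm a b * u)%g; last split.
- apply/existsP; exists (tperm (u a) (u b)).
  rewrite inv_count_swap // tperm_mul_conj eqxx !andbT.
  apply/existsP; exists (u a); apply/existsP; exists (u b).
  by rewrite eqxx andbT ord_neq_lt.
- by apply: swap_keeps_rank_le => // k ak uak ukva; apply: bmin; rewrite ak uak.
- have am : a.+1 < m.+1 by rewrite ltnS (leq_trans ab) // ltnW.
  have bm : u b < m.+1 by rewrite ltnS ltnW.
  apply: (ltn_sum_pointwise (j := Ordinal am)) => [p|].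
    by apply: leq_sum => q _; rewrite perm_rank_swap // leq_addr.
  apply: (ltn_sum_pointwise (j := Ordinal bm)) => [q|].
    by rewrite perm_rank_swap // leq_addr.
  by rewrite perm_rank_swap //= ltnSn ab uab leqnn addn1.
Qed.

Lemma bruhat_le_of_rank_le u v : rank_le u v -> bruhat_le u v.
Proof.
move=> uv; have [d] := ubnP (rank_total v - rank_total u).
elim: d u uv => [|d IH] u uv // /ltnSE gap.
have [->|nuv] := eqVneq u v; first exact: connect0.
have [w st [wv uw]] := bruhat_step_toward nuv uv.
apply: connect_trans (connect1 st) (IH w wv _).
by have := rank_total_le wv; lia.
Qed.

End BruhatRankCriterion.

Section RookPlacements.
Variable n : nat.
Variable D : {set 'I_n * 'I_n}.
Hypothesis hD : rook_placement D.

Lemma rook_below_diag x : x \in D -> x.2 < x.1.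
Proof. by case: hD => sub _ _ /sub. Qed.

Lemma rook_row_inj x y : x \in D -> y \in D -> x.1 = y.1 -> x = y.
Proof.
case: hD => _ row _ xD yD e; apply: (card_le1_eqP (row x.1)); by rewrite !inE ?xD ?yD e eqxx.
Qed.

Lemma rook_col_inj x y : x \in D -> y \in D -> x.2 = y.2 -> x = y.
Proof.
case: hD => _ _ col xD yD e; apply: (card_le1_eqP (col x.2)); by rewrite !inE ?xD ?yD e eqxx.
Qed.

End RookPlacements.

Lemma tr_nat_tperm m a b (ha : a < m) (hb : b < m) :
  tr_nat m a b = tperm (Ordinal ha) (Ordinal hb).
Proof.
by rewrite /tr_nat (insubT (fun k => k < m) ha) (insubT (fun k => k < m) hb).
Qed.

Definition sw_count n (D : {set 'I_n * 'I_n}) (i j : nat) : nat :=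
  #|[set x in D | (i <= x.1) && (x.2 <= j)]|.

Section SigmaRank.
Variable n : nat.
Variable D : {set 'I_n * 'I_n}.
Hypothesis hD : rook_placement D.
Local Notation m := (n.*2 - 2).

Definition root_lo (x : 'I_n * 'I_n) : nat := (nat_of_ord x.2).*2.
Definition root_hi (x : 'I_n * 'I_n) : nat := (nat_of_ord x.1).*2 - 1.
Definition root_tperm (x : 'I_n * 'I_n) : {perm 'I_m} := tr_nat m (root_hi x) (root_lo x).

Definition root_rect (x : 'I_n * 'I_n) (p q : nat) : nat :=
  [&& root_lo x < p <= root_hi x & root_lo x < q <= root_hi x].

Lemma root_bounds x : x \in D -> root_lo x < root_hi x < m.
Proof.
move/(rook_below_diag hD); rewrite /root_lo /root_hi -!muln2.
by case: x => [[i ?] [j ?]] /=; lia.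
Qed.

(* Distinct rooks move disjoint pairs of positions: the low positions are
   even, the high ones odd, and rows and columns of rooks are distinct. *)
Lemma root_positions_disjoint x y : x \in D -> y \in D -> x != y ->
  [&& root_lo x != root_lo y, root_lo x != root_hi y,
      root_hi x != root_lo y & root_hi x != root_hi y].
Proof.
move=> xD yD nxy; have := rook_below_diag hD xD; have := rook_below_diag hD yD.
have r : nat_of_ord x.1 != y.1.
  by apply: contra nxy => /eqP/val_inj/(rook_row_inj hD xD yD) ->.
have c : nat_of_ord x.2 != y.2.
  by apply: contra nxy => /eqP/val_inj/(rook_col_inj hD xD yD) ->.
move: r c; rewrite /root_lo /root_hi -!muln2.
by case: x {xD nxy} => [[i ?] [j ?]]; case: y {yD} => [[k ?] [l ?]] /=; lia.
Qed.

Lemma root_tperm_fix x (z : 'I_m) :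
  val z != root_hi x -> val z != root_lo x -> root_tperm x z = z.
Proof.
move=> zh zl; rewrite /root_tperm /tr_nat.
case: (@insubP _ (fun k => k < m) 'I_m (root_hi x)) => [a _ va|_];
case: (@insubP _ (fun k => k < m) 'I_m (root_lo x)) => [b _ vb|_] //=;
  try by rewrite perm1.
by rewrite tpermD // -val_eqE ?va ?vb eq_sym.
Qed.

Lemma root_prod_fix (s : seq ('I_n * 'I_n)) (z : 'I_m) :
  (forall x, x \in s -> (val z != root_hi x) && (val z != root_lo x)) ->
  (\prod_(x <- s) root_tperm x)%g z = z.
Proof.
elim: s => [|y s IH] zs; first by rewrite big_nil perm1.
rewrite big_cons permM; have /andP[zh zl] := zs y (mem_head _ _).
by rewrite root_tperm_fix // IH // => x xs; apply: zs; rewrite inE xs orbT.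
Qed.

Lemma perm_rank_root_prod (s : seq ('I_n * 'I_n)) p q : uniq s -> {subset s <= D} ->
  perm_rank (\prod_(x <- s) root_tperm x)%g p q =
  perm_rank (1%g : {perm 'I_m}) p q + \sum_(x <- s) root_rect x p q.
Proof.
elim: s => [|y s IH] /=; first by rewrite !big_nil addn0.
case/andP => ys us sD; have yD : y \in D by apply: sD; exact: mem_head.
have sD' : {subset s <= D} by move=> x xs; apply: sD; rewrite inE xs orbT.
have /andP[lohi him] := root_bounds yD; have lom := ltn_trans lohi him.
set lo := Ordinal lom; set hi := Ordinal him.
have r_fix (z : 'I_m) : z \in [:: lo; hi] -> (\prod_(x <- s) root_tperm x)%g z = z.
  rewrite !inE => zy; apply: root_prod_fix => x xs.
  have nyx : y != x by apply: contraNneq ys => ->.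
  have := root_positions_disjoint yD (sD' x xs) nyx.
  by case/and4P => h1 h2 h3 h4; case/orP: zy => /eqP-> /=; rewrite ?h1 ?h2 ?h3 ?h4.
have ty : root_tperm y = tperm lo hi by rewrite /root_tperm tr_nat_tperm tpermC.
rewrite big_cons ty perm_rank_swap ?r_fix ?inE ?eqxx ?orbT //= IH // big_cons.
by rewrite /root_rect; lia.
Qed.

Lemma perm_rank_sigma p q :
  perm_rank (sigma_D D) p q =
  perm_rank (1%g : {perm 'I_m}) p q + \sum_(x in D) root_rect x p q.
Proof.
rewrite /sigma_D -[in LHS]big_filter -[in RHS]big_filter.
apply: perm_rank_root_prod; first by rewrite filter_uniq // index_enum_uniq.
by move=> x; rewrite mem_filter => /andP[].
Qed.

Lemma root_rect_sum p q : 0 < minn p q ->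
  \sum_(x in D) root_rect x p q = sw_count D ((maxn p q + 2) %/ 2) ((minn p q - 1) %/ 2).
Proof.
move=> pq0; rewrite /sw_count -sum1_card big_mkcond [RHS]big_mkcond /=.
apply: eq_bigr => x _; rewrite inE; case: ifP => //= xD; move: (rook_below_diag hD xD).
rewrite /root_rect /root_lo /root_hi -!muln2.
by case: x {xD} => [[i ?] [j ?]] /= ji; case: ifP; lia.
Qed.

End SigmaRank.

Lemma root_rect_sum_le n (D D' : {set 'I_n * 'I_n}) :
  rook_placement D -> rook_placement D' ->
  (forall i j : nat, j < i -> sw_count D i j <= sw_count D' i j) ->
  forall p q, \sum_(x in D) root_rect x p q <= \sum_(x in D') root_rect x p q.
Proof.
move=> hD hD' le_sw p q; have [pq0|pq0] := posnP (minn p q).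
  rewrite big1 // => x _; apply/eqP; rewrite eqb0 /root_rect; lia.
by rewrite !root_rect_sum //; apply: le_sw; lia.
Qed.

Section OrbitMinors.
Variable F : fieldType.
Local Open Scope ring_scope.

Lemma det_mul_thin k l (A : 'M[F]_(k, l)) (B : 'M[F]_(l, k)) :
  (l < k)%N -> \det (A *m B) = 0.
Proof.
move=> lk; apply/eqP; apply: contraLR lk => /negbTE detAB; rewrite -leqNgt.
have /mxrank_unit <- : A *m B \in unitmx by rewrite unitmxE unitfE detAB.
exact: leq_trans (mxrankM_maxl A B) (rank_leq_col A).
Qed.

Definition msum V (l : seq (mpoly F V)) : mpoly F V := foldr (@MAdd F V) (MConst _ 0) l.
Definition mprod V (l : seq (mpoly F V)) : mpoly F V := foldr (@MMul F V) (MConst _ 1) l.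

Lemma meval_msum V (x : V -> F) l : meval x (msum l) = \sum_(p <- l) meval x p.
Proof. by elim: l => [|a l IH]; rewrite ?big_nil ?big_cons //= IH. Qed.

Lemma meval_mprod V (x : V -> F) l : meval x (mprod l) = \prod_(p <- l) meval x p.
Proof. by elim: l => [|a l IH]; rewrite ?big_nil ?big_cons //= IH. Qed.

Variable n : nat.

Definition minor_poly k (r c : 'I_k -> 'I_n) : mpoly F ('I_n * 'I_n) :=
  msum [seq MMul (MConst _ ((-1) ^+ s))
             (mprod [seq MVar F (r i, c (s i)) | i <- index_enum 'I_k])
       | s : {perm 'I_k} <- index_enum {perm 'I_k}].

Lemma meval_minor_poly k (r c : 'I_k -> 'I_n) (x : 'M[F]_n) :
  meval (fun v => x v.1 v.2) (minor_poly r c) = \det (\matrix_(s, t) x (r s) (c t)).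
Proof.
rewrite meval_msum big_map /determinant; apply: eq_bigr => s _ /=.
by rewrite meval_mprod big_map; congr (_ * _); apply: eq_bigr => i _; rewrite mxE.
Qed.

(* The inverse of an invertible upper-triangular matrix is upper triangular;
   by induction on the column, reading off (invmx b *m b) i j = 0. *)
Lemma invmx_upper (b : 'M[F]_n) :
  in_B b -> forall i j : 'I_n, (j < i)%N -> invmx b i j = 0.
Proof.
move=> [bu bt].
have b_diag (k : 'I_n) : b k k != 0.
  have : \det b != 0 by rewrite -unitfE -unitmxE.
  rewrite -det_tr det_trig; last by apply/is_trig_mxP => i0 j0 h; rewrite mxE bt.
  by move/prodf_neq0 => /(_ k isT); rewrite mxE.
move=> i j; have [N] := ubnP j; elim: N i j => // N IH i j /ltnSE jN ji.
have := congr1 (fun M : 'M[F]_n => M i j) (mulVmx bu).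
rewrite !mxE (bigD1 j) //= big1 ?addr0 => [|k nkj].
  rewrite (_ : (i == j) = false) => [/eqP|]; last first.
    by apply/negbTE; rewrite eq_sym ord_neq_lt.
  by rewrite mulf_eq0 (negbTE (b_diag j)) orbF => /eqP.
have [jk|kj_le] := ltnP j k; first by rewrite bt ?mulr0.
have kj : (k < j)%N by rewrite ltn_neqAle val_eqE nkj kj_le.
by rewrite IH ?mul0r ?(leq_trans kj jN) ?(ltn_trans kj ji).
Qed.

Lemma conj_f_D_entry (E : {set 'I_n * 'I_n}) (b : 'M[F]_n) u v :
  (b *m f_D F E *m invmx b) u v = \sum_(x in E) b u x.1 * invmx b x.2 v.
Proof.
rewrite mxE; under eq_bigr => w _ do rewrite mxE big_distrl.
rewrite exchange_big pair_big /= [RHS]big_mkcond; apply: eq_bigr => x _ /=.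
by rewrite mxE -surjective_pairing; case: (x \in E); rewrite ?mulr1 ?mulr0 ?mul0r.
Qed.

(* On an orbit B.f_E, every minor whose rows are >= i and columns are <= j
   (j < i) and whose size exceeds the number of roots of E in that
   south-west corner vanishes: the minor factors through the corner roots,
   because b and b^-1 are upper triangular. *)
Lemma Omega_corner_minor (E : {set 'I_n * 'I_n}) (y : 'M[F]_n) (i j k : nat)
    (r c : 'I_k -> 'I_n) :
  Omega E y -> (j < i)%N -> (forall s, i <= r s)%N -> (forall t, c t <= j)%N ->
  (sw_count E i j < k)%N -> \det (\matrix_(s, t) y (r s) (c t)) = 0.
Proof.
move=> [b [bB ->]] ji ri cj; rewrite /sw_count; set SE := [set x in E | _] => small.
pose Bm : 'M[F]_(k, #|SE|) := \matrix_(s, t) b (r s) (enum_val t).1.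
pose Cm : 'M[F]_(#|SE|, k) := \matrix_(t, s) invmx b (enum_val t).2 (c s).
suff -> : \matrix_(s, t) B_act b (f_D F E) (r s) (c t) = Bm *m Cm by exact: det_mul_thin.
apply/matrixP => s t; rewrite [LHS]mxE /B_act /lowpart [LHS]mxE (_ : (c t < r s)%N); last first.
  by apply: leq_ltn_trans (cj t) (leq_trans ji (ri s)).
rewrite conj_f_D_entry (bigID (mem SE)) /= [X in _ + X]big1 ?addr0; last first.
  move=> x /andP[xE]; rewrite !inE xE /= negb_and -!ltnNge.
  case/orP => [x1i|jx2]; first by case: bB => _ ->; rewrite ?mul0r // (leq_trans x1i).
  by rewrite (invmx_upper bB) ?mulr0 // (leq_ltn_trans (cj t)).
rewrite (eq_bigl (mem SE)) => [|x]; last by rewrite /= !inE; case: (x \in E).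
by rewrite big_enum_val mxE; apply: eq_bigr => x _; rewrite !mxE.
Qed.

Lemma f_D_in_Omega (D : {set 'I_n * 'I_n}) : rook_placement D -> Omega D (f_D F D).
Proof.
move=> hD; exists 1%:M; split.
  split=> [|i0 j0 ji0]; first exact: unitmx1.
  by rewrite mxE (_ : (i0 == j0) = false) //; apply/negbTE; rewrite eq_sym ord_neq_lt.
rewrite /B_act invmx1 mul1mx mulmx1; apply/matrixP => i0 j0; rewrite !mxE.
by case: ltnP => // ij; case: ifP => // /(rook_below_diag hD); rewrite ltnNge ij.
Qed.

Lemma f_D_rook_minor (D : {set 'I_n * 'I_n}) k (x : 'I_k -> 'I_n * 'I_n) :
  rook_placement D -> injective x -> (forall s, x s \in D) ->
  \matrix_(s, t) f_D F D (x s).1 (x t).2 = 1%:M.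
Proof.
move=> hD xinj xD; apply/matrixP => s t; rewrite !mxE.
have [->|nst] := eqVneq s t; first by rewrite -surjective_pairing xD.
case: ifP => // st; case/negP: nst; apply/eqP/xinj.
exact: etrans (rook_row_inj hD (xD s) st erefl) (rook_col_inj hD st (xD t) erefl).
Qed.

(* Otherwise
   the corner minor on the rooks of D would be a polynomial vanishing on
   Omega_E but equal to 1 at f_D. *)
Lemma sw_count_le_of_closure (D E : {set 'I_n * 'I_n}) : rook_placement D ->
  (forall x : 'M[F]_n, Omega D x -> zariski_closure (Omega E) x) ->
  forall i j : nat, (j < i)%N -> (sw_count D i j <= sw_count E i j)%N.
Proof.
move=> hD DE i j ji; rewrite leqNgt; apply/negP.
rewrite /sw_count; set SD := [set x in D | _] => small.
pose rook (s : 'I_#|SD|) := enum_val s.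
have rookSD s : rook s \in SD by exact: enum_valP.
have rookD s : rook s \in D by move: (rookSD s); rewrite inE => /andP[].
suff : (1 : F) = 0 by move/eqP; rewrite oner_eq0.
rewrite -(@det1 F #|SD|) -(f_D_rook_minor hD enum_val_inj rookD) -meval_minor_poly.
apply: (DE _ (f_D_in_Omega hD)) => y Oy; rewrite meval_minor_poly.
by apply: (Omega_corner_minor Oy ji) => // s; move: (rookSD s); rewrite !inE => /and3P[].
Qed.

End OrbitMinors.

Unset Implicit Arguments.
Local Open Scope ring_scope.

Theorem corollary1p8 (F : closedFieldType) (hF : [pchar F] =i pred0)
  (n : nat) (hn : (2 <= n)%N) (D D' : {set 'I_n * 'I_n})
  (hD : rook_placement D) (hD' : rook_placement D') :
  (forall x : 'M[F]_n, Omega D x -> zariski_closure (Omega D') x) ->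
  bruhat_le (sigma_D D) (sigma_D D').
Proof.
move=> closure; apply: bruhat_le_of_rank_le => p q.
rewrite !perm_rank_sigma // leq_add2l; apply: root_rect_sum_le => //.
exact: sw_count_le_of_closure closure.
Qed.
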